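(* Let $\phi\in C^4(\mathbb{R})$ be a profile function of a graph-like backward self-similar solution to the planar surface diffusion flow, i.e. $$\frac{\phi(x_1) - x_1\phi'(x_1)}{4\,v(x_1)} = \frac{1}{v}\frac{d}{dx_1}\Big(\frac{1}{v}\frac{dk}{dx_1}\Big)\quad\text{on }\mathbb{R},\qquad v=\sqrt{1+(\phi')^2},\ k=\phi''/v^3.$$ Define $$D_0[\phi](x_1) := \phi(x_1)^2 + x_1^2 - \Big(\int_0^{x_1}\sqrt{1+\phi'(z)^2}\,dz + |\phi(0)|\Big)^2.$$ If $\phi$ is not linear, then $\liminf_{x_1\to+\infty} D_0[\phi](x_1) = -\infty$ or $\liminf_{x_1\to-\infty} D_0[\phi](x_1) = -\infty$.
   Context: The displayed equation is the backward profile equation $\frac{x\cdot\mathbf{n}}{4}=\partial_s^2 k$ for the graph $\Gamma_*=\{(x_1,\phi(x_1))\}$, with upward unit normal $\mathbf{n}=(-\phi',1)/v$, curvature $k$ and arc-length derivative $\partial_s=v^{-1}\partial_{x_1}$. ''Linear'' means $\phi(x_1)=cx_1+c'$ for constants $c,c'$. *)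

From Stdlib Require Import Reals.
From Coquelicot Require Import Coquelicot.
Open Scope R_scope.

Definition C4 (phi : R -> R) : Prop :=
  (forall (n : nat) (x : R), (n <= 4)%nat -> ex_derive_n phi n x) /\
  (forall x : R, continuous (Derive_n phi 4) x).

Definition vfun (phi : R -> R) (x : R) : R := sqrt (1 + (Derive phi x) ^ 2).

Definition kfun (phi : R -> R) (x : R) : R := Derive_n phi 2 x / (vfun phi x) ^ 3.

Definition profile_eq (phi : R -> R) : Prop :=
  forall x : R,
    (phi x - x * Derive phi x) / (4 * vfun phi x) =
    / vfun phi x * Derive (fun y => / vfun phi y * Derive (kfun phi) y) x.

Definition phi_is_linear (phi : R -> R) : Prop :=
  exists c c' : R, forall x, phi x = c * x + c'.

Definition D0 (phi : R -> R) (x : R) : R :=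
  phi x ^ 2 + x ^ 2 -
  (RInt (fun z => sqrt (1 + (Derive phi z) ^ 2)) 0 x + Rabs (phi 0)) ^ 2.

Definition liminf_pinfty_minfty (f : R -> R) : Prop :=
  forall M N : R, exists x : R, N < x /\ f x < M.

Definition liminf_minfty_minfty (f : R -> R) : Prop :=
  forall M N : R, exists x : R, x < N /\ f x < M.

From Stdlib Require Import Reals Lra Lia Classical.
From Coquelicot Require Import Coquelicot.
Open Scope R_scope.

(* Let r(x) = |(x, phi x)| and let L(x) be the signed arclength of the graph
   from x = 0.  By Cauchy-Schwarz r' <= sqrt (1 + phi'^2) = L', so the chord gap
   g = r - L - |phi 0| is nonincreasing on [0, oo) with g(0) = 0, and
   D0[phi] = g (r + L + |phi 0|).  If g(x1) < 0 for some x1 > 0, then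
   D0[phi](x) <= g(x1) x -> -oo.  Otherwise g = 0 on [0, oo), equality in
   Cauchy-Schwarz gives phi = x phi', and phi is linear through the origin on
   [0, oo).  Then phi 0 = 0 makes D0 symmetric under x |-> -x, the same argument
   applied to phi (- x) makes phi linear on (-oo, 0], and continuity of phi' at 0
   matches the two slopes. *)

Lemma sqrt_cauchy_eq (a b c d : R) :
  a * c + b * d = sqrt (a² + b²) * sqrt (c² + d²) -> a * d = b * c.
Proof.
  intros E.
  assert (Lagrange : (a² + b²) * (c² + d²) = (a * c + b * d)² + (a * d - b * c)²)
    by (unfold Rsqr; ring).
  rewrite <- sqrt_mult in E by (apply Rplus_le_le_0_compat; apply Rle_0_sqr).
  assert (Sq : (a * c + b * d)² = (a² + b²) * (c² + d²)).
  { rewrite E, Rsqr_sqrt; [reflexivity|].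
    apply Rmult_le_pos; apply Rplus_le_le_0_compat; apply Rle_0_sqr. }
  assert (Z : (a * d - b * c)² = 0) by lra.
  apply Rsqr_0_uniq in Z. lra.
Qed.

Lemma continuous_eventually_const (F : (R -> Prop) -> Prop) {FF : ProperFilter F}
  (f : R -> R) (x c : R) :
  filter_le F (locally x) -> continuous f x -> F (fun t => f t = c) -> f x = c.
Proof.
  intros HF Hf Hc.
  apply (filterlim_locally_unique (F := F) f).
  - exact (filterlim_filter_le_1 f HF Hf).
  - apply (filterlim_ext_loc (fun _ => c)).
    + apply (filter_imp (fun t => f t = c)); auto.
    + apply filterlim_const.
Qed.

Lemma nonincreasing_of_derive_nonpos (f df : R -> R) (a b : R) : a <= b ->
  (forall x, a < x < b -> is_derive f x (df x)) ->
  (forall x, a < x < b -> df x <= 0) ->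
  (forall x, a <= x <= b -> continuity_pt f x) ->
  f b <= f a.
Proof.
  intros Hab Hder Hneg Hcont.
  (* MVT_gen may pick an endpoint, where nothing is known about [df]. *)
  destruct (MVT_gen f a b (fun t => Rmin 0 (df t))) as [c [_ E]];
    rewrite ?Rmin_left, ?Rmax_right by lra.
  - intros x Hx. rewrite Rmin_right by (apply Hneg; lra). apply Hder; lra.
  - intros x Hx. apply Hcont; lra.
  - assert (Rmin 0 (df c) <= 0) by apply Rmin_l.
    assert (Rmin 0 (df c) * (b - a) <= 0) by (apply Rmult_le_0_r; lra).
    lra.
Qed.

Lemma homogeneous_of_euler (f : R -> R) : (forall x, ex_derive f x) ->
  (forall x, 0 < x -> f x = x * Derive f x) -> forall x, 0 < x -> f x = f 1 * x.
Proof.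
  intros Hf Heuler x Hx.
  destruct (MVT_gen (fun y => f y / y) 1 x (fun _ => 0)) as [c [_ E]].
  - intros t [Ht _].
    assert (Hpos : 0 < t) by (apply Rle_lt_trans with (Rmin 1 x); auto;
                                apply Rmin_glb; lra).
    auto_derive; [split; [apply Hf | split; [lra | exact I]] |].
    rewrite (Heuler t Hpos). change (Derive (fun y => f y) t) with (Derive f t).
    field. lra.
  - intros t [Ht _].
    assert (Hpos : 0 < t) by (apply Rlt_le_trans with (Rmin 1 x); auto;
                                apply Rmin_glb_lt; lra).
    apply continuity_pt_filterlim, (ex_derive_continuous (fun y => f y / y)).
    auto_derive. split; [apply Hf | split; [lra | exact I]].
  - replace (f 1 / 1) with (f 1) in E by field.
    assert (Hq : f x / x = f 1) by lra.
    rewrite <- Hq. field. lra.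
Qed.

Lemma liminf_pinfty_minfty_of_le_linear (f : R -> R) (x1 eps : R) : 0 < eps ->
  (forall x, x1 <= x -> f x <= - eps * x) -> liminf_pinfty_minfty f.
Proof.
  intros Heps Hf M N.
  set (x := Rmax x1 (Rmax N (- M / eps)) + 1).
  pose proof (Rmax_l x1 (Rmax N (- M / eps))).
  pose proof (Rmax_r x1 (Rmax N (- M / eps))).
  pose proof (Rmax_l N (- M / eps)). pose proof (Rmax_r N (- M / eps)).
  exists x. split; [unfold x; lra |].
  assert (eps * (- M / eps) < eps * x) by (apply Rmult_lt_compat_l; unfold x; lra).
  replace (eps * (- M / eps)) with (- M) in * by (field; lra).
  specialize (Hf x ltac:(unfold x; lra)). lra.
Qed.

Lemma continuous_Ropp x : continuous Ropp x.
Proof. apply (@ex_derive_continuous R_AbsRing R_NormedModule). auto_derive. exact I. Qed.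

Lemma RInt_comp_opp (f : R -> R) (a b : R) : (forall z, continuous f z) ->
  RInt (fun z => f (- z)) a b = - RInt f (- a) (- b).
Proof.
  intros Hf.
  assert (Hex : ex_RInt (fun z => f (- z)) a b).
  { apply (@ex_RInt_continuous R_CompleteNormedModule). intros z _.
    apply (continuous_comp Ropp f); [apply continuous_Ropp | apply Hf]. }
  pose proof (RInt_comp_lin f (-1) 0 a b) as E.
  replace (-1 * a + 0) with (- a) in E by ring. replace (-1 * b + 0) with (- b) in E by ring.
  rewrite <- E by (apply (@ex_RInt_continuous R_CompleteNormedModule); intros; apply Hf).
  rewrite (RInt_ext (fun y => scal (-1) (f (-1 * y + 0))) (fun y => opp (f (- y)))).
  - replace (RInt (fun y => opp (f (- y))) a b) with (opp (RInt (fun z => f (- z)) a b))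
      by exact (eq_sym (RInt_opp _ _ _ Hex)).
    exact (eq_sym (Ropp_involutive _)).
  - intros y _. replace (-1 * y + 0) with (- y) by ring.
    change (-1 * f (- y) = - f (- y)). ring.
Qed.

Lemma Derive_eq_slope_near (f : R -> R) (a t : R) :
  locally t (fun y => f y = a * y) -> Derive f t = a.
Proof.
  intros Hf. apply is_derive_unique.
  apply (is_derive_ext_loc (fun y => a * y)).
  - apply (filter_imp (fun y => f y = a * y)); [intros y Hy; symmetry; exact Hy | exact Hf].
  - auto_derive; [exact I | ring].
Qed.

Section C1Graph.

Variable phi : R -> R.
Hypothesis phi_derivable : forall x, ex_derive phi x.
Hypothesis Derive_phi_continuous : forall x, continuous (Derive phi) x.

Definition radius (x : R) : R := sqrt (x ^ 2 + phi x ^ 2).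
Definition arclength (x : R) : R := RInt (vfun phi) 0 x.
Definition radial_speed (x : R) : R := (x + phi x * Derive phi x) / radius x.
Definition chord_gap (x : R) : R := radius x - arclength x - Rabs (phi 0).

Lemma continuous_vfun x : continuous (vfun phi) x.
Proof.
  unfold vfun.
  apply (continuous_comp (fun y => 1 + Derive phi y ^ 2) sqrt); [| apply continuous_sqrt].
  apply (continuous_plus (fun _ => 1)); [apply continuous_const |].
  apply (continuous_mult (Derive phi)); [apply Derive_phi_continuous |].
  apply (continuous_mult (Derive phi)); [apply Derive_phi_continuous | apply continuous_const].
Qed.

Lemma ex_RInt_vfun a b : ex_RInt (vfun phi) a b.
Proof. apply (@ex_RInt_continuous R_CompleteNormedModule). intros; apply continuous_vfun. Qed.

Lemma is_derive_arclength x : is_derive arclength x (vfun phi x).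
Proof.
  apply is_derive_RInt with 0; [| apply continuous_vfun].
  apply filter_forall. intros b. apply (@RInt_correct R_CompleteNormedModule), ex_RInt_vfun.
Qed.

Lemma arclength_ge_0 x : 0 <= x -> 0 <= arclength x.
Proof. intros Hx. apply RInt_ge_0; [exact Hx | apply ex_RInt_vfun | intros; apply sqrt_pos]. Qed.

Lemma le_radius x : x <= radius x.
Proof.
  apply Rle_trans with (Rabs x); [apply Rle_abs |].
  unfold radius. rewrite <- sqrt_Rsqr_abs. apply sqrt_le_1_alt.
  pose proof (pow2_ge_0 (phi x)). unfold Rsqr. lra.
Qed.

Lemma radius_gt_0 x : x <> 0 -> 0 < radius x.
Proof.
  intros Hx. apply sqrt_lt_R0.
  pose proof (pow2_gt_0 x Hx). pose proof (pow2_ge_0 (phi x)). lra.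
Qed.

Lemma is_derive_radius x : x <> 0 -> is_derive radius x (radial_speed x).
Proof.
  intros Hx. pose proof (radius_gt_0 x Hx) as Hr.
  unfold radial_speed, radius in *. auto_derive.
  - split; [apply phi_derivable | split; [| exact I]].
    pose proof (pow2_gt_0 x Hx). pose proof (pow2_ge_0 (phi x)). lra.
  - replace (x * (x * 1) + phi x * (phi x * 1)) with (x ^ 2 + phi x ^ 2) by ring.
    change (Derive (fun y => phi y) x) with (Derive phi x).
    field. lra.
Qed.

Lemma radial_speed_le_vfun x : x <> 0 -> radial_speed x <= vfun phi x.
Proof.
  intros Hx. pose proof (radius_gt_0 x Hx) as Hr.
  unfold radial_speed. apply Rle_div_l; [exact Hr |].
  pose proof (sqrt_cauchy x (phi x) 1 (Derive phi x)) as CS.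
  unfold radius, vfun. unfold Rsqr in CS. rewrite Rmult_1_r in CS.
  replace (x ^ 2 + phi x ^ 2) with (x * x + phi x * phi x) by ring.
  replace (1 + Derive phi x ^ 2) with (1 * 1 + Derive phi x * Derive phi x) by ring.
  lra.
Qed.

Lemma euler_of_radial_speed_eq x : x <> 0 -> radial_speed x = vfun phi x ->
  phi x = x * Derive phi x.
Proof.
  intros Hx E. pose proof (radius_gt_0 x Hx) as Hr.
  unfold radial_speed in E. apply Rmult_eq_compat_r with (r := radius x) in E.
  unfold Rdiv in E. rewrite Rmult_assoc, Rinv_l, Rmult_1_r in E by lra.
  symmetry. rewrite <- (Rmult_1_r (phi x)).
  apply sqrt_cauchy_eq with (c := 1).
  unfold radius, vfun in E. unfold Rsqr.
  replace (x * x + phi x * phi x) with (x ^ 2 + phi x ^ 2) by ring.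
  replace (1 * 1 + Derive phi x * Derive phi x) with (1 + Derive phi x ^ 2) by ring.
  rewrite Rmult_1_r, E. ring.
Qed.

Lemma chord_gap_0 : chord_gap 0 = 0.
Proof.
  unfold chord_gap, radius, arclength. rewrite RInt_point.
  replace (0 ^ 2 + phi 0 ^ 2) with (phi 0)² by (unfold Rsqr; ring).
  rewrite sqrt_Rsqr_abs. unfold zero. simpl. ring.
Qed.

Lemma is_derive_chord_gap x : x <> 0 ->
  is_derive chord_gap x (radial_speed x - vfun phi x).
Proof.
  intros Hx. replace (radial_speed x - vfun phi x) with (radial_speed x - vfun phi x - 0) by ring.
  apply is_derive_Reals.
  apply (derivable_pt_lim_minus (fun y => radius y - arclength y) (fun _ => Rabs (phi 0)));
    [apply derivable_pt_lim_minus | apply derivable_pt_lim_const];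
    apply is_derive_Reals; [apply is_derive_radius, Hx | apply is_derive_arclength].
Qed.

Lemma continuity_pt_chord_gap x : continuity_pt chord_gap x.
Proof.
  apply (continuity_pt_minus (fun y => radius y - arclength y) (fun _ => Rabs (phi 0)));
    [apply continuity_pt_minus | apply continuity_pt_const; intros ? ?; reflexivity];
    apply continuity_pt_filterlim.
  - apply (continuous_comp (fun y => y ^ 2 + phi y ^ 2) sqrt); [| apply continuous_sqrt].
    apply (@ex_derive_continuous R_AbsRing R_NormedModule). auto_derive. apply phi_derivable.
  - apply (@ex_derive_continuous R_AbsRing R_NormedModule). eexists. apply is_derive_arclength.
Qed.

Lemma chord_gap_nonincreasing a b : 0 <= a -> a <= b -> chord_gap b <= chord_gap a.
Proof.
  intros Ha Hab.
  apply (nonincreasing_of_derive_nonpos _ (fun x => radial_speed x - vfun phi x)); [exact Hab | | |].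
  - intros x Hx. apply is_derive_chord_gap. lra.
  - intros x Hx. pose proof (radial_speed_le_vfun x ltac:(lra)). lra.
  - intros x _. apply continuity_pt_chord_gap.
Qed.

Lemma D0_chord_gap x :
  D0 phi x = chord_gap x * (radius x + arclength x + Rabs (phi 0)).
Proof.
  assert (Hr : radius x * radius x = x ^ 2 + phi x ^ 2).
  { apply sqrt_sqrt. pose proof (pow2_ge_0 x). pose proof (pow2_ge_0 (phi x)). lra. }
  unfold D0, chord_gap. fold (vfun phi). fold (arclength x).
  replace (phi x ^ 2 + x ^ 2) with (radius x * radius x) by lra. ring.
Qed.

Lemma euler_of_chord_gap_zero : (forall x, 0 < x -> chord_gap x = 0) ->
  forall x, 0 < x -> phi x = x * Derive phi x.
Proof.
  intros Hzero x Hx.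
  assert (Hflat : is_derive chord_gap x 0).
  { apply (is_derive_ext_loc (fun _ => 0)); [| apply is_derive_Reals, derivable_pt_lim_const].
    apply (filter_imp (fun t => 0 < t)); [intros t Ht; symmetry; apply Hzero, Ht |].
    apply open_gt, Hx. }
  pose proof (is_derive_unique _ _ _ Hflat) as E0.
  rewrite (is_derive_unique _ _ _ (is_derive_chord_gap x ltac:(lra))) in E0.
  apply euler_of_radial_speed_eq; lra.
Qed.

Lemma half_line_dichotomy :
  liminf_pinfty_minfty (D0 phi) \/ forall x, 0 <= x -> phi x = phi 1 * x.
Proof.
  destruct (classic (exists x1, 0 < x1 /\ chord_gap x1 < 0)) as [[x1 [Hx1 Hneg]] | Hnone].
  - left. apply (liminf_pinfty_minfty_of_le_linear _ x1 (- chord_gap x1)); [lra |].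
    intros x Hx. rewrite D0_chord_gap.
    pose proof (chord_gap_nonincreasing x1 x ltac:(lra) Hx).
    pose proof (le_radius x). pose proof (arclength_ge_0 x ltac:(lra)).
    pose proof (Rabs_pos (phi 0)).
    nra.
  - right.
    assert (Hzero : forall x, 0 < x -> chord_gap x = 0).
    { intros x Hx. pose proof (chord_gap_nonincreasing 0 x ltac:(lra) ltac:(lra)) as Hle.
      rewrite chord_gap_0 in Hle.
      destruct (Rle_lt_or_eq_dec _ _ Hle) as [Hlt | Heq]; [| exact Heq].
      exfalso. apply Hnone. exists x. split; assumption. }
    pose proof (homogeneous_of_euler phi phi_derivable (euler_of_chord_gap_zero Hzero)) as Hlin.
    intros x [Hx | <-]; [apply Hlin, Hx |].
    apply Rminus_diag_uniq.
    apply (continuous_eventually_const (at_right 0) (fun t => phi t - phi 1 * t)).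
    + apply filter_le_within.
    + apply (continuous_minus phi (fun t => phi 1 * t)).
      * apply (@ex_derive_continuous R_AbsRing R_NormedModule), phi_derivable.
      * apply (@ex_derive_continuous R_AbsRing R_NormedModule). auto_derive. exact I.
    + exists (mkposreal 1 Rlt_0_1). intros t _ Ht. rewrite Hlin by exact Ht. ring.
Qed.

Lemma slopes_eq_of_halflines (a b : R) :
  (forall x, 0 <= x -> phi x = a * x) -> (forall x, x <= 0 -> phi x = b * x) -> a = b.
Proof.
  intros Hpos Hneg.
  assert (Ha : Derive phi 0 = a).
  { apply (continuous_eventually_const (at_right 0));
      [apply filter_le_within | apply Derive_phi_continuous |].
    exists (mkposreal 1 Rlt_0_1). intros t _ Ht. apply Derive_eq_slope_near.
    apply (filter_imp (fun y => 0 < y)); [intros y Hy; apply Hpos; lra | apply open_gt, Ht]. }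
  assert (Hb : Derive phi 0 = b).
  { apply (continuous_eventually_const (at_left 0));
      [apply filter_le_within | apply Derive_phi_continuous |].
    exists (mkposreal 1 Rlt_0_1). intros t _ Ht. apply Derive_eq_slope_near.
    apply (filter_imp (fun y => y < 0)); [intros y Hy; apply Hneg; lra | apply open_lt, Ht]. }
  congruence.
Qed.

Lemma is_derive_reflect x : is_derive (fun y => phi (- y)) x (- Derive phi (- x)).
Proof.
  auto_derive; [apply phi_derivable |].
  change (Derive (fun y => phi y)) with (Derive phi). ring.
Qed.

Lemma ex_derive_reflect x : ex_derive (fun y => phi (- y)) x.
Proof. eexists. apply is_derive_reflect. Qed.

Lemma Derive_reflect x : Derive (fun y => phi (- y)) x = - Derive phi (- x).
Proof. apply is_derive_unique, is_derive_reflect. Qed.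

Lemma continuous_Derive_reflect x : continuous (Derive (fun y => phi (- y))) x.
Proof.
  apply (continuous_ext (fun y => - Derive phi (- y))); [intros y; symmetry; apply Derive_reflect |].
  apply (continuous_comp (fun y => Derive phi (- y)) Ropp); [| apply continuous_Ropp].
  apply (continuous_comp Ropp (Derive phi)); [apply continuous_Ropp | apply Derive_phi_continuous].
Qed.

(* D0 adds |phi 0| to the signed arclength, so it is reflection-invariant only
   when phi 0 = 0. *)
Lemma D0_reflect : phi 0 = 0 -> forall x, D0 (fun y => phi (- y)) x = D0 phi (- x).
Proof.
  intros H0 x. unfold D0. fold (vfun phi).
  rewrite (RInt_ext _ (fun z => vfun phi (- z))).
  2: { intros z _. rewrite Derive_reflect. unfold vfun. f_equal. ring. }
  rewrite RInt_comp_opp by apply continuous_vfun.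
  rewrite Ropp_0, H0, Rabs_R0. ring.
Qed.

End C1Graph.

Theorem mainTheorem9 (phi : R -> R) :
  C4 phi -> profile_eq phi -> ~ phi_is_linear phi ->
  liminf_pinfty_minfty (D0 phi) \/ liminf_minfty_minfty (D0 phi).
Proof.
  intros [Hreg _] _ Hnonlinear.
  assert (Hd : forall x, ex_derive phi x) by (intros x; exact (Hreg 1%nat x ltac:(lia))).
  assert (Hc : forall x, continuous (Derive phi) x).
  { intros x. apply (@ex_derive_continuous R_AbsRing R_NormedModule).
    exact (Hreg 2%nat x ltac:(lia)). }
  destruct (half_line_dichotomy phi Hd Hc) as [Hright | Hlin_right]; [now left |].
  assert (H0 : phi 0 = 0) by (rewrite Hlin_right by lra; ring).
  destruct (half_line_dichotomy (fun y => phi (- y))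
              (ex_derive_reflect phi Hd) (continuous_Derive_reflect phi Hd Hc))
    as [Hleft | Hlin_left].
  - right. intros M N. destruct (Hleft M (- N)) as [x [Hx HD]].
    exists (- x). split; [lra |]. rewrite <- D0_reflect; assumption.
  - assert (Hlin_neg : forall x, x <= 0 -> phi x = - phi (-1) * x).
    { intros x Hx. rewrite <- (Ropp_involutive x) at 1. rewrite Hlin_left by lra.
      replace (- (1)) with (-1) by ring. ring. }
    exfalso. apply Hnonlinear. exists (phi 1), 0. intros x.
    destruct (Rle_dec 0 x) as [Hx | Hx].
    + rewrite Hlin_right by exact Hx. ring.
    + rewrite Hlin_neg by lra.
      rewrite (slopes_eq_of_halflines phi Hc _ _ Hlin_right Hlin_neg). ring.
Qed.
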